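(* Let $d\geq1$, let $\hat\rho$ be a $d\times d$ density operator with eigenvalues $\hat r_1,\dots,\hat r_d$ and eigenvalue decomposition $\hat\rho=\sum_i\hat r_i|b_i\rangle\!\langle b_i|$, and fix $p_\rho>0$. Then the problem maximize $\sum_{i=1}^d\hat r_is_i+p_\rho\sqrt{1-\sum_{i=1}^ds_i^2}$ over $(s_1,\dots,s_d)\in\mathbb R^d$ subject to $\sum_{i=1}^ds_i=1$ and $\sum_{i=1}^ds_i^2\leq1$ has a unique solution. Its optimal value is $$\frac1d\left(1+\sqrt{d-1}\sqrt{d\big(p_\rho^2+\mathrm{Tr}(\hat\rho^2)\big)-1}\right),$$ and the optimal array is $s_i^\sharp=\frac1d+c\,(\hat r_i-\frac1d)$ with $c=\sqrt{\frac{d-1}{d(p_\rho^2+\mathrm{Tr}(\hat\rho^2))-1}}$, i.e. it corresponds to the matrix $$\sigma^\sharp=\sum_i s_i^\sharp|b_i\rangle\!\langle b_i|=\frac1d\mathbb 1+\sqrt{\frac{d-1}{d(p_\rho^2+\mathrm{Tr}(\hat\rho^2))-1}}\Big(\hat\rho-\frac1d\mathbb 1\Big).$$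
   Context: $\mathbb 1$ denotes the $d\times d$ identity matrix. *)

From HB Require Import structures.
From mathcomp Require Import all_boot all_order all_algebra.
From mathcomp Require Import complex.
Set Implicit Arguments. Unset Strict Implicit. Unset Printing Implicit Defensive.
Import Order.TTheory GRing.Theory Num.Theory.
Local Open Scope ring_scope.

Definition adjmx (R : rcfType) m n (A : 'M[R[i]]_(m, n)) : 'M[R[i]]_(n, m) :=
  (map_mx (@conjc R) A)^T.

Definition density (R : rcfType) d (rho : 'M[R[i]]_d) : Prop :=
  [/\ adjmx rho = rho,
      (forall v : 'cV[R[i]]_d, 0 <= (adjmx v *m rho *m v) 0 0)
    & \tr rho = 1].

Definition objective (R : rcfType) d (r : 'I_d -> R) (p : R) (s : 'rV[R]_d) : R :=
  \sum_i r i * s 0 i + p * Num.sqrt (1 - \sum_i s 0 i ^+ 2).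

Definition feasible (R : rcfType) d (s : 'rV[R]_d) : Prop :=
  \sum_i s 0 i = 1 /\ \sum_i s 0 i ^+ 2 <= 1.

(** Center a feasible [s] at the uniform distribution, [x_i = s_i - 1/d], and append
    the slack [q = sqrt (1 - sum_i s_i^2)] as an extra coordinate.  Then [(x, q)]
    lies on the sphere of radius [sqrt (1 - 1/d)] in [R^(d+1)], and the objective is
    [1/d] plus the inner product of [(x, q)] with the fixed vector [(r - 1/d, p)].
    By Cauchy-Schwarz and its equality case, such a linear functional is maximized
    on the sphere exactly at the nonnegative multiple of [(r - 1/d, p)], which gives
    the optimal array, its value and its uniqueness.  On the matrix side, the
    orthonormal eigenbasis turns [Tr rho] and [Tr rho^2] into [sum_i r_i] and
    [sum_i r_i^2], and the rank-one projections [|b_i><b_i|] sum to the identity. *)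

From HB Require Import structures.
From mathcomp Require Import all_boot all_order all_algebra.
From mathcomp Require Import complex.
From mathcomp Require Import ring lra.
Import Order.TTheory GRing.Theory Num.Theory.
Local Open Scope ring_scope.
Set Implicit Arguments. Unset Strict Implicit.

Lemma sum_option (V : nmodType) (I : finType) (F : option I -> V) :
  \sum_o F o = F None + \sum_i F (Some i).
Proof.
rewrite -big_enum (perm_big (None :: map Some (enum I))) /=.
  by rewrite big_cons big_map big_enum.
apply: uniq_perm; first exact: enum_uniq.
  rewrite /= map_inj_uniq ?enum_uniq ?andbT; last exact: Some_inj.
  by apply/mapP; case.
by case=> [i|]; rewrite mem_enum inE // (mem_map Some_inj) mem_enum.
Qed.

Section CauchySchwarz.
Variables (R : realFieldType) (I : finType) (u v : I -> R).

Lemma sum_sqr_subZ k :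
  \sum_i (v i - k * u i) ^+ 2
  = \sum_i v i ^+ 2 - 2 * k * \sum_i u i * v i + k ^+ 2 * \sum_i u i ^+ 2.
Proof.
rewrite !mulr_sumr -sumrB -big_split /=; apply: eq_bigr => i _; ring.
Qed.

Lemma cauchy_schwarz :
  (\sum_i u i * v i) ^+ 2 <= (\sum_i u i ^+ 2) * \sum_i v i ^+ 2.
Proof.
set U := \sum_i u i ^+ 2; set L := \sum_i u i * v i.
have U_ge0 : 0 <= U by apply: sumr_ge0 => i _; apply: sqr_ge0.
have [U0 | U_neq0] := eqVneq U 0.
  have u0 i : u i = 0.
    by apply/eqP; rewrite -sqrf_eq0; apply/eqP/(psumr_eq0P _ U0) => // j _; apply: sqr_ge0.
  have -> : L = 0 by rewrite /L big1 // => i _; rewrite u0 mul0r.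
  by rewrite U0 mul0r expr0n.
have U_gt0 : 0 < U by rewrite lt_def U_neq0.
have := sum_sqr_subZ (L / U).
have -> : \sum_i v i ^+ 2 - 2 * (L / U) * L + (L / U) ^+ 2 * U
          = (U * \sum_i v i ^+ 2 - L ^+ 2) / U by field; rewrite gt_eqF.
move=> eq_sum; have : 0 <= (U * \sum_i v i ^+ 2 - L ^+ 2) / U.
  by rewrite -eq_sum; apply: sumr_ge0 => i _; apply: sqr_ge0.
by rewrite pmulr_lge0 ?invr_gt0 // subr_ge0.
Qed.

Lemma cauchy_schwarz_eq k :
  \sum_i v i ^+ 2 = k ^+ 2 * \sum_i u i ^+ 2 ->
  \sum_i u i * v i = k * \sum_i u i ^+ 2 -> forall i, v i = k * u i.
Proof.
move=> Kv Lv i; apply/eqP; rewrite -subr_eq0 -sqrf_eq0; apply/eqP.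
have : \sum_j (v j - k * u j) ^+ 2 = 0 by rewrite sum_sqr_subZ Kv Lv; ring.
by move/psumr_eq0P; apply=> // j _; apply: sqr_ge0.
Qed.

Lemma sum_mul_le_sphere k : 0 <= k ->
  \sum_i v i ^+ 2 = k ^+ 2 * \sum_i u i ^+ 2 ->
  \sum_i u i * v i <= k * \sum_i u i ^+ 2.
Proof.
move=> k_ge0 Kv; have := cauchy_schwarz; rewrite Kv.
have : 0 <= k * \sum_i u i ^+ 2 by rewrite mulr_ge0 // sumr_ge0 // => i _; apply: sqr_ge0.
nra.
Qed.

End CauchySchwarz.

Lemma sum_mul_centered (R : numFieldType) d (f g : 'I_d -> R) : (0 < d)%N ->
  \sum_i f i = 1 -> \sum_i g i = 1 ->
  \sum_i f i * g i = d%:R^-1 + \sum_i (f i - d%:R^-1) * (g i - d%:R^-1).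
Proof.
move=> d_gt0 sum_f sum_g; have d_neq0 : (d%:R : R) != 0 by rewrite pnatr_eq0 -lt0n.
have -> : \sum_i (f i - d%:R^-1) * (g i - d%:R^-1)
  = \sum_i f i * g i - d%:R^-1 * \sum_i f i - d%:R^-1 * \sum_i g i
    + \sum_(i < d) d%:R^-1 * d%:R^-1.
  by rewrite !mulr_sumr -!sumrB -big_split /=; apply: eq_bigr => i _; ring.
by rewrite sum_f sum_g sumr_const card_ord -[_ *+ d]mulr_natr; field.
Qed.

Lemma sum_centered (R : numFieldType) d (f : 'I_d -> R) : (0 < d)%N ->
  \sum_i f i = 1 -> \sum_i (f i - d%:R^-1) = 0.
Proof.
move=> d_gt0 sum_f; have d_neq0 : (d%:R : R) != 0 by rewrite pnatr_eq0 -lt0n.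
by rewrite sumrB sum_f sumr_const card_ord -[_ *+ d]mulr_natr mulVf ?subrr.
Qed.

Lemma sum_sqr_centered (R : numFieldType) d (f : 'I_d -> R) : (0 < d)%N ->
  \sum_i f i = 1 -> \sum_i f i ^+ 2 = d%:R^-1 + \sum_i (f i - d%:R^-1) ^+ 2.
Proof.
move=> d_gt0 sum_f; under eq_bigr do rewrite expr2.
by rewrite (sum_mul_centered d_gt0 sum_f sum_f); under eq_bigr do rewrite -expr2.
Qed.

Section CenteredProblem.
Variables (R : rcfType) (d : nat) (r : 'I_d -> R) (p : R).
Hypotheses (d_gt0 : (0 < d)%N) (sum_r : \sum_i r i = 1) (p_gt0 : 0 < p).

Let n : R := d%:R.

Let n_neq0 : n != 0.
Proof. by rewrite pnatr_eq0 -lt0n. Qed.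

Definition direction : option 'I_d -> R := oapp (fun i => r i - n^-1) p.

Definition embedding (s : 'rV[R]_d) : option 'I_d -> R :=
  oapp (fun i => s 0 i - n^-1) (Num.sqrt (1 - \sum_i s 0 i ^+ 2)).

Lemma objective_embedding (s : 'rV[R]_d) : \sum_i s 0 i = 1 ->
  objective r p s = n^-1 + \sum_o direction o * embedding s o.
Proof.
by move=> sum_s; rewrite sum_option /objective (sum_mul_centered d_gt0 sum_r sum_s) /=; ring.
Qed.

Lemma sum_sqr_embedding (s : 'rV[R]_d) : feasible s -> \sum_o embedding s o ^+ 2 = 1 - n^-1.
Proof.
move=> [sum_s sqr_s]; rewrite sum_option /= sqr_sqrtr ?subr_ge0 //.
by rewrite (sum_sqr_centered d_gt0 sum_s) -/n; ring.
Qed.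

Let W : R := n * (p ^+ 2 + \sum_i r i ^+ 2) - 1.

Lemma sum_sqr_direction : \sum_o direction o ^+ 2 = W / n.
Proof.
by rewrite sum_option /W (sum_sqr_centered d_gt0 sum_r) -/n /=; field.
Qed.

Let W_gt0 : 0 < W.
Proof.
have direction_gt0 : 0 < \sum_o direction o ^+ 2.
  by rewrite sum_option ltr_pwDl ?exprn_gt0 // sumr_ge0 // => i _; apply: sqr_ge0.
by rewrite -[W](divfK n_neq0) -sum_sqr_direction mulr_gt0 // ltr0n.
Qed.

Definition optimal_scale : R := Num.sqrt ((n - 1) / W).

Let c := optimal_scale.

Lemma optimal_scale_ge0 : 0 <= c.
Proof. exact: sqrtr_ge0. Qed.

Lemma sqr_optimal_scale : c ^+ 2 * \sum_o direction o ^+ 2 = 1 - n^-1.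
Proof.
have W_neq0 : W != 0 by rewrite gt_eqF ?W_gt0.
rewrite sum_sqr_direction sqr_sqrtr; first by field; apply/andP.
by apply: divr_ge0; [rewrite subr_ge0 ler1n | exact: ltW W_gt0].
Qed.

Definition optimal_array : 'rV[R]_d := \row_i (n^-1 + c * (r i - n^-1)).

Let s0 := optimal_array.

Lemma sum_optimal_array : \sum_i s0 0 i = 1.
Proof.
under eq_bigr do rewrite mxE.
rewrite big_split /= -mulr_sumr (sum_centered d_gt0 sum_r) mulr0 addr0.
by rewrite sumr_const card_ord -[_ *+ d]mulr_natr mulVf.
Qed.

Lemma slack_optimal_array : 1 - \sum_i s0 0 i ^+ 2 = (c * p) ^+ 2.
Proof.
rewrite (sum_sqr_centered d_gt0 sum_optimal_array).
under eq_bigr do rewrite mxE addrAC subrr add0r exprMn.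
rewrite -mulr_sumr; have := sqr_optimal_scale; rewrite sum_option /= => sqr_c.
by rewrite -/n opprD addrA -sqr_c; ring.
Qed.

Lemma feasible_optimal_array : feasible s0.
Proof.
by split; rewrite ?sum_optimal_array // -subr_ge0 slack_optimal_array sqr_ge0.
Qed.

Lemma embedding_optimal_array o : embedding s0 o = c * direction o.
Proof.
case: o => [i|] /=; first by rewrite mxE addrAC subrr add0r.
rewrite slack_optimal_array sqrtr_sqr ger0_norm //.
by rewrite mulr_ge0 ?optimal_scale_ge0 ?ltW.
Qed.

Lemma objective_optimal_array :
  objective r p s0 = n^-1 + c * \sum_o direction o ^+ 2.
Proof.
rewrite objective_embedding ?sum_optimal_array // mulr_sumr.
by congr (_ + _); apply: eq_bigr => o _; rewrite embedding_optimal_array; ring.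
Qed.

Lemma objective_le_optimal_array s : feasible s -> objective r p s <= objective r p s0.
Proof.
move=> feas_s; rewrite objective_optimal_array objective_embedding ?lerD2l; last by case: feas_s.
apply: sum_mul_le_sphere; first exact: optimal_scale_ge0.
by rewrite sqr_optimal_scale sum_sqr_embedding.
Qed.

Lemma objective_eq_optimal_array s : feasible s ->
  objective r p s = objective r p s0 -> s = s0.
Proof.
move=> feas_s; rewrite objective_optimal_array objective_embedding; last by case: feas_s.
move/addrI => opt_s; apply/rowP => i.
have sqr_s : \sum_o embedding s o ^+ 2 = c ^+ 2 * \sum_o direction o ^+ 2.
  by rewrite sqr_optimal_scale sum_sqr_embedding.
by rewrite mxE -(cauchy_schwarz_eq sqr_s opt_s (Some i)) addrC subrK.
Qed.

Lemma optimal_value :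
  objective r p s0 = n^-1 * (1 + Num.sqrt (n - 1) * Num.sqrt W).
Proof.
have sqrtW_gt0 : 0 < Num.sqrt W by rewrite sqrtr_gt0 W_gt0.
have cW : c * W = Num.sqrt (n - 1) * Num.sqrt W.
  rewrite /c /optimal_scale sqrtrM ?subr_ge0 ?ler1n // sqrtrV ?(ltW W_gt0) //.
  by rewrite -{2}(sqr_sqrtr (ltW W_gt0)); field; rewrite gt_eqF.
by rewrite objective_optimal_array sum_sqr_direction -cW; field.
Qed.

End CenteredProblem.

Section SpectralDecomposition.
Variables (R : rcfType) (d : nat) (b : 'I_d -> 'cV[R[i]]_d) (r : 'I_d -> R).
Hypothesis b_orthonormal : forall i j, adjmx (b i) *m b j = (i == j)%:R%:M.

Let P i := b i *m adjmx (b i).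
Let rho := \sum_i ((r i)%:C)%C *: P i.

Lemma mul_proj i j : P i *m P j = (i == j)%:R *: P i.
Proof.
rewrite /P mulmxA -(mulmxA (b i)) b_orthonormal mul_mx_scalar -scalemxAl.
by case: (eqVneq i j) => [-> | _] //; rewrite !scale0r.
Qed.

Lemma mxtrace_proj i : \tr (P i) = 1.
Proof. by rewrite /P mxtrace_mulC b_orthonormal eqxx mxtrace_scalar. Qed.

Lemma sum_proj : \sum_i P i = 1%:M.
Proof.
pose B : 'M[R[i]]_d := \matrix_(j, i) b i j 0.
have unitary_B : adjmx B *m B = 1%:M.
  apply/matrixP => i k; rewrite !mxE.
  move: (b_orthonormal i k) => /matrixP /(_ 0 0); rewrite !mxE eqxx mulr1n => <-.
  by apply: eq_bigr => j _; rewrite !mxE.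
rewrite -(mulmx1C unitary_B); apply/matrixP => j l; rewrite summxE !mxE.
by apply: eq_bigr => i _; rewrite /P !mxE big_ord1 !mxE.
Qed.

Lemma mxtrace_spectral : \tr rho = ((\sum_i r i)%:C)%C.
Proof.
rewrite /rho raddf_sum rmorph_sum; apply: eq_bigr => i _.
by rewrite /= mxtraceZ mxtrace_proj mulr1.
Qed.

Lemma mxtrace_spectral_sqr : \tr (rho *m rho) = ((\sum_i r i ^+ 2)%:C)%C.
Proof.
rewrite {1}/rho mulmx_suml raddf_sum rmorph_sum; apply: eq_bigr => i _.
rewrite /= -scalemxAl mxtraceZ /rho mulmx_sumr raddf_sum /=.
under eq_bigr => j _ do rewrite -scalemxAr mxtraceZ mul_proj mxtraceZ mxtrace_proj mulr1.
rewrite (bigD1 i) //= eqxx mulr1 big1 => [|j nji]; last first.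
  by rewrite eq_sym (negbTE nji) mulr0.
by rewrite addr0 -rmorphM expr2.
Qed.

Lemma spectral_affine (a c : R) :
  \sum_i (((a + c * (r i - a))%:C)%C *: P i)
  = ((a%:C)%C)%:M + (c%:C)%C *: (rho - ((a%:C)%C)%:M).
Proof.
rewrite -[((_%:C)%C)%:M]scalemx1 -sum_proj !scaler_sumr -sumrB scaler_sumr -big_split /=.
apply: eq_bigr => i _; rewrite -scalerBl scalerA -scalerDl; congr (_ *: _).
by rewrite rmorphD rmorphM rmorphB.
Qed.

End SpectralDecomposition.

Unset Implicit Arguments.

Theorem lemma2 (R : rcfType) (d : nat) (rho : 'M[R[i]]_d)
    (r : 'I_d -> R) (b : 'I_d -> 'cV[R[i]]_d) (p : R) :
  (0 < d)%N ->
  density rho ->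
  (forall i j, adjmx (b i) *m b j = (i == j)%:R%:M) ->
  rho = \sum_i ((r i)%:C)%C *: (b i *m adjmx (b i)) ->
  0 < p ->
  let T := complex.Re (\tr (rho *m rho)) in
  let c := Num.sqrt ((d%:R - 1) / (d%:R * (p ^+ 2 + T) - 1)) in
  let sopt : 'rV[R]_d := \row_i (d%:R^-1 + c * (r i - d%:R^-1)) in
  [/\ feasible sopt,
      (forall s, feasible s -> objective r p s <= objective r p sopt),
      (forall s, feasible s -> objective r p s = objective r p sopt -> s = sopt),
      objective r p sopt
        = d%:R^-1 * (1 + Num.sqrt (d%:R - 1) * Num.sqrt (d%:R * (p ^+ 2 + T) - 1))
    & \sum_i ((sopt 0 i)%:C)%C *: (b i *m adjmx (b i))
        = (d%:R^-1)%:M + (c%:C)%C *: (rho - (d%:R^-1)%:M)].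
Proof.
move=> d_gt0 [_ _ tr_rho] b_orthonormal rho_spectral p_gt0 T c sopt.
have sum_r : \sum_i r i = 1.
  move: tr_rho; rewrite rho_spectral mxtrace_spectral //.
  by move/(congr1 (@complex.Re R)).
have T_sum : T = \sum_i r i ^+ 2.
  by rewrite /T rho_spectral mxtrace_spectral_sqr.
have sopt_opt : sopt = optimal_array r p by apply/rowP => i; rewrite !mxE /c T_sum.
have c_opt : c = optimal_scale r p by rewrite /c T_sum.
rewrite sopt_opt c_opt T_sum; split.
- exact: feasible_optimal_array.
- exact: objective_le_optimal_array.
- exact: objective_eq_optimal_array.
- exact: optimal_value.
- have nC : (d%:R^-1 : R[i]) = ((d%:R^-1 : R)%:C)%C by rewrite fmorphV rmorph_nat.
  under eq_bigr do rewrite mxE.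
  by rewrite nC rho_spectral spectral_affine.
Qed.
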